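(* Let $f$ be a biderivation of $\mathcal{SV}(0)$, and let $\phi,\psi:\mathcal{SV}(0)\to\mathcal{SV}(0)$ be linear maps and $\rho_1,\rho_2,\rho_3,\theta_1,\theta_2,\theta_3$ linear complex-valued functions on $\mathcal{SV}(0)$ such that for all $x,y$, $$f(x,y)=\sum_{i=1}^3\rho_i(x)D_i(y)+[\phi(x),y]=\sum_{i=1}^3\theta_i(y)D_i(x)+[x,\psi(y)].$$ Then there exist $\lambda\in\mathbb{C}$, numbers $s_0^{(m)},e_0^{(m)}\in\mathbb{C}$ ($m\in\mathbb{Z}$), and a family $\{\mu_k\in\mathbb{C}\mid k\in\mathbb{Z}\}$ with only finitely many nonzero $\mu_k$, such that for every $m\in\mathbb{Z}$ $$\phi(L_m)=\lambda L_m+\sum_{k\in\mathbb{Z}\setminus\{-m\}}\frac{\mu_k}{m+k}M_{m+k}+s_0^{(m)}M_0,\qquad \psi(L_m)=\lambda L_m-\sum_{k\in\mathbb{Z}\setminus\{-m\}}\frac{\mu_k}{m+k}M_{m+k}+e_0^{(m)}M_0.$$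
   Context: $\mathcal{SV}(0)$ is the complex Lie algebra with basis $\{L_i,Y_i,M_i\mid i\in\mathbb{Z}\}$ and brackets $[L_m,L_n]=(m-n)L_{m+n}$, $[L_m,Y_n]=(\frac12 m-n)Y_{m+n}$, $[L_m,M_n]=-nM_{m+n}$, $[Y_m,Y_n]=(m-n)M_{m+n}$, $[Y_m,M_n]=[M_m,M_n]=0$. A biderivation of a Lie algebra $L$ is a bilinear map $f:L\times L\to L$ with $f([x,y],z)=[x,f(y,z)]+[f(x,z),y]$ and $f(x,[y,z])=[f(x,y),z]+[y,f(x,z)]$ for all $x,y,z\in L$. The linear maps $D_1,D_2,D_3$ are defined by $D_1(L_m)=M_m$, $D_1(Y_m)=D_1(M_m)=0$; $D_2(L_m)=mM_m$, $D_2(Y_m)=D_2(M_m)=0$; $D_3(L_m)=0$, $D_3(Y_m)=Y_m$, $D_3(M_m)=2M_m$. *)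

From HB Require Import structures.
From mathcomp Require Import all_boot all_order all_algebra.
From mathcomp Require Import complex.
From mathcomp Require Import Rstruct.
From mathcomp Require Import finmap.
From mathcomp.multinomials Require Import monalg.

Set Implicit Arguments.
Unset Strict Implicit.
Unset Printing Implicit Defensive.

Import GRing.Theory Num.Theory.
Local Open Scope ring_scope.

Definition C : fieldType := complex Rdefinitions.R.

(* basis indices: inl (inl m) = L_m, inl (inr m) = Y_m, inr m = M_m *)
Definition B := (int + int + int)%type.

Definition V : lmodType C := {malg C[B]}.

Definition Lb (m : int) : V := << inl (inl m) >>.
Definition Yb (m : int) : V := << inl (inr m) >>.
Definition Mb (m : int) : V := << inr m >>.

Definition ext (g : B -> V) (x : V) : V :=
  \sum_(k <- finmap.enum_fset (msupp x)) x@_k *: g k.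

Definition brB (a b : B) : V :=
  match a, b with
  | inl (inl m), inl (inl n) => (m - n)%:~R *: Lb (m + n)
  | inl (inl m), inl (inr n) => (m%:~R / 2 - n%:~R) *: Yb (m + n)
  | inl (inl m), inr n => (- n%:~R) *: Mb (m + n)
  | inl (inr m), inl (inl n) => (- (n%:~R / 2 - m%:~R)) *: Yb (m + n)
  | inl (inr m), inl (inr n) => (m - n)%:~R *: Mb (m + n)
  | inl (inr _), inr _ => 0
  | inr m, inl (inl n) => m%:~R *: Mb (m + n)
  | inr _, inl (inr _) => 0
  | inr _, inr _ => 0
  end.

Definition br (x y : V) : V := ext (fun a => ext (brB a) y) x.

Definition D1 : V -> V := ext (fun a => match a with
  | inl (inl m) => Mb m | _ => 0 end).
Definition D2 : V -> V := ext (fun a => match a with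
  | inl (inl m) => m%:~R *: Mb m | _ => 0 end).
Definition D3 : V -> V := ext (fun a => match a with
  | inl (inl _) => 0 | inl (inr m) => Yb m | inr m => 2%:R *: Mb m end).

Definition bilinear_map (f : V -> V -> V) : Prop :=
  (forall (a : C) (x x' y : V), f (a *: x + x') y = a *: f x y + f x' y) /\
  (forall (a : C) (x y y' : V), f x (a *: y + y') = a *: f x y + f x y').

Definition biderivation (f : V -> V -> V) : Prop :=
  bilinear_map f /\
  (forall x y z : V, f (br x y) z = br x (f y z) + br (f x z) y) /\
  (forall x y z : V, f x (br y z) = br (f x y) z + br y (f x z)).

From HB Require Import structures.
From mathcomp Require Import all_boot all_order all_algebra.
From mathcomp Require Import complex.
From mathcomp Require Import Rstruct.
From mathcomp Require Import finmap.
From mathcomp.multinomials Require Import monalg.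
From mathcomp Require Import zify.
Import GRing.Theory Num.Theory.
Local Open Scope ring_scope.

(* Away from M_m and M_n, where the D_i-terms live, the two expressions for
   f(L_m, L_n) say that [phi(L_m), L_n] and [L_m, psi(L_n)] have the same
   coefficients.  Since ad L_n shifts every basis index by n with an explicit
   weight, this is, for each of the three kinds of basis vectors, a linear
   system linking the coefficient of phi(L_m) at index m + j with that of
   psi(L_n) at index n + j.  Solving the systems: the L-coefficients are a
   common scalar lambda on the diagonal, the Y-coefficients vanish, and
   j * phi(L_m)_{M_j} depends only on j - m and is the negative of
   j * psi(L_m)_{M_j}.  The M_0-coefficients are left unconstrained. *)

Lemma exists_int_neq2 (m0 m1 : int) : exists n : int, n != m0 /\ n != m1.
Proof.
have [<-|m01] := eqVneq (m0 + 1) m1; last by exists (m0 + 1); split=> //; lia.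
by exists (m0 + 2); split; lia.
Qed.

(* The systems satisfied by a m j := phi(L_m)_{X_j} and a' n j := psi(L_n)_{X_j}
   for X = L, Y, M: compare coefficients in [X_{m+j}, L_n] = [L_m, X_{n+j}]. *)
Section ShiftedCoefficientSystems.

Context {R : numFieldType}.
Implicit Types (m n j k : int).

Lemma intr_mulIf m (x y : R) : m != 0 -> x * m%:~R = y * m%:~R -> x = y.
Proof. by move=> m0; apply: mulIf; rewrite intr_eq0. Qed.

Lemma intr_mul_eq0 m (x : R) : m != 0 -> x * m%:~R = 0 -> x = 0.
Proof. by move=> m0 /eqP; rewrite mulf_eq0 intr_eq0 (negbTE m0) orbF => /eqP. Qed.

Lemma halfB_eq0 m n : (m%:~R / 2 - n%:~R == 0 :> R) = (m == 2 * n).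
Proof.
have two0 : (2 : R) != 0 by rewrite pnatr_eq0.
rewrite -(can_eq (mulfK two0)) mul0r mulrBl divfK // -[2 : R]/(2%:~R) -intrM.
by rewrite -intrB intr_eq0 subr_eq0 mulrC.
Qed.

Lemma Lsystem_diagonal (a a' : int -> int -> R) :
  (forall m n j, a m (m + j) * (m + j - n)%:~R = a' n (n + j) * (m - (n + j))%:~R) ->
  exists lam, forall m j, a m j = lam *+ (j == m) /\ a' m j = lam *+ (j == m).
Proof.
move=> eqa.
have diag m n : m != n -> a m m = a' n n.
  move=> mn; apply: (@intr_mulIf (m - n)); first by rewrite subr_eq0.
  by have := eqa m n 0; rewrite !addr0.
have a_diag m : a m m = a 0 0.
  have [n [nm n0]] := exists_int_neq2 m 0.
  by rewrite (diag m n) 1?eq_sym // -(diag 0 n) // eq_sym.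
have a'_diag n : a' n n = a 0 0.
  by have [m [mn _]] := exists_int_neq2 n n; rewrite -(diag m n) // a_diag.
have a'_off n j : j != 0 -> a' n (n + j) = 0.
  move=> j0; apply: (@intr_mul_eq0 (n - j - (n + j))); first lia.
  by rewrite -eqa subrK subrr mulr0.
have a_off m j : j != 0 -> a m (m + j) = 0.
  move=> j0; apply: (@intr_mul_eq0 (m + j - (m + j + 1))); first lia.
  by rewrite eqa a'_off ?mul0r.
exists (a 0 0) => m j; have [->|jm] := eqVneq j m; first by rewrite a_diag a'_diag.
have -> : j = m + (j - m) by rewrite addrC subrK.
by rewrite a_off ?a'_off //; lia.
Qed.

Lemma Ysystem_zero (b b' : int -> int -> R) :
  (forall m n j, b m (m + j) * - (n%:~R / 2 - (m + j)%:~R)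
                 = b' n (n + j) * (m%:~R / 2 - (n + j)%:~R)) ->
  forall m j, b m j = 0 /\ b' m j = 0.
Proof.
move=> eqb.
have mulhalf_eq0 m n (x : R) : m != 2 * n -> x * (m%:~R / 2 - n%:~R) = 0 -> x = 0.
  by rewrite -halfB_eq0 => h /eqP; rewrite mulf_eq0 (negbTE h) orbF => /eqP.
have b'_even t j : t != - (2 * j) -> b' (2 * t + 2 * j) (2 * t + 2 * j + j) = 0.
  move=> tj; apply: (mulhalf_eq0 t (2 * t + 2 * j + j)); first lia.
  apply/eqP; rewrite -eqb mulf_eq0 oppr_eq0 (_ : _ / 2 - _ == 0) ?orbT //.
  by rewrite halfB_eq0; lia.
have b0 m j : b m (m + j) = 0.
  have [t [tm tj]] := exists_int_neq2 m (- (2 * j)).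
  apply: (mulhalf_eq0 (2 * t + 2 * j) (m + j)); first lia.
  apply/eqP; rewrite -oppr_eq0 -mulrN eqb b'_even ?mul0r //; lia.
have b'0 n j : b' n (n + j) = 0.
  apply: (mulhalf_eq0 (2 * (n + j) + 1) (n + j)); first lia.
  by rewrite -eqb b0 mul0r.
move=> m j; have -> : j = m + (j - m) by rewrite addrC subrK.
by rewrite b0 b'0.
Qed.

Lemma Msystem_inverse_index (c c' : int -> int -> R) :
  (forall m n k, m + k != 0 -> n + k != 0 ->
     c m (m + k) * (m + k)%:~R = c' n (n + k) * - (n + k)%:~R) ->
  exists mu : int -> R, forall m k, m + k != 0 ->
    c m (m + k) * (m + k)%:~R = mu k /\ c' m (m + k) * (m + k)%:~R = - mu k.
Proof.
move=> eqc; exists (fun k => c (1 - k) 1) => m k mk0.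
have k1 : 1 - k + k != 0 by rewrite subrK.
have -> : c (1 - k) 1 = c (1 - k) (1 - k + k) * (1 - k + k)%:~R by rewrite subrK mulr1.
split; first by rewrite (eqc m (1 - k)) // (eqc (1 - k) (1 - k)).
by rewrite (eqc (1 - k) m) // mulrN opprK.
Qed.

End ShiftedCoefficientSystems.

Notation Lidx m := (inl (inl m) : B).
Notation Yidx m := (inl (inr m) : B).
Notation Midx m := (inr m : B).

Lemma eq_Lidx m n : (Lidx m == Lidx n) = (m == n).
Proof. by []. Qed.

Lemma eq_Midx m n : (Midx m == Midx n) = (m == n).
Proof. by []. Qed.

Lemma ext_basis (g : B -> V) (b : B) : ext g << b >> = g b.
Proof. by rewrite /ext msuppU oner_eq0 big_seq_fset1 mcoeffUU scale1r. Qed.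

Lemma mcoeff_ext (g : B -> V) (x : V) (c h : B) :
  (forall a, a != h -> (g a)@_c = 0) -> (ext g x)@_c = x@_h * (g h)@_c.
Proof.
move=> gc0; rewrite /ext raddf_sum /=.
under eq_bigr => k _ do rewrite mcoeffZ.
have [hx|hx] := boolP (h \in enum_fset (msupp x)).
  rewrite (bigD1_seq h) ?fset_uniq //= big1 ?addr0 // => k kh.
  by rewrite gc0 ?mulr0.
rewrite mcoeff_outdom // mul0r big1 // => k _.
by have [->|kh] := eqVneq k h; rewrite ?(mcoeff_outdom hx) ?mul0r ?gc0 ?mulr0.
Qed.

Definition shift (n : int) (b : B) : B :=
  match b with
  | inl (inl j) => Lidx (j + n)
  | inl (inr j) => Yidx (j + n)
  | inr j => Midx (j + n)
  end.

Lemma shift_inj n : injective (shift n).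
Proof. by move=> [[i|i]|i] [[j|j]|j] //= [] /addIr ->. Qed.

Lemma mcoeff_scale_shift (g : B -> V) n (h : B) :
  (forall a, g a = (g a)@_(shift n a) *: << shift n a >>) ->
  forall a, a != h -> (g a)@_(shift n h) = 0.
Proof.
move=> gE a ah; rewrite gE mcoeffZ mcoeffU.
by rewrite (inj_eq (@shift_inj n)) (negbTE ah) mulr0.
Qed.

Lemma brB_Lr_shift n a : brB a (Lidx n) = (brB a (Lidx n))@_(shift n a) *: << shift n a >>.
Proof. by case: a => [[j|j]|j]; rewrite /= mcoeffZ mcoeffU eqxx mulr1. Qed.

Lemma brB_Ll_shift m a : brB (Lidx m) a = (brB (Lidx m) a)@_(shift m a) *: << shift m a >>.
Proof. by case: a => [[j|j]|j]; rewrite /= mcoeffZ mcoeffU (addrC j) eqxx mulr1. Qed.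

Lemma mcoeff_br_Lr (x : V) n (h : B) :
  (br x (Lb n))@_(shift n h) = x@_h * (brB h (Lidx n))@_(shift n h).
Proof.
rewrite /br (@mcoeff_ext (fun a => ext (brB a) (Lb n)) x (shift n h) h) /Lb ?ext_basis //.
move=> a; rewrite ext_basis; apply: (@mcoeff_scale_shift (brB^~ (Lidx n))).
exact: brB_Lr_shift.
Qed.

Lemma mcoeff_br_Ll m (y : V) (h : B) :
  (br (Lb m) y)@_(shift m h) = y@_h * (brB (Lidx m) h)@_(shift m h).
Proof.
rewrite /br /Lb ext_basis (@mcoeff_ext (brB (Lidx m)) y (shift m h) h) //.
exact/mcoeff_scale_shift/brB_Ll_shift.
Qed.

Lemma mcoeff_br_Lr_L x n j : (br x (Lb n))@_(Lidx (j + n)) = x@_(Lidx j) * (j - n)%:~R.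
Proof. by rewrite (mcoeff_br_Lr x n (Lidx j)) /= mcoeffZ mcoeffU eqxx mulr1. Qed.

Lemma mcoeff_br_Lr_Y x n j :
  (br x (Lb n))@_(Yidx (j + n)) = x@_(Yidx j) * - (n%:~R / 2 - j%:~R).
Proof. by rewrite (mcoeff_br_Lr x n (Yidx j)) /= mcoeffZ mcoeffU eqxx mulr1. Qed.

Lemma mcoeff_br_Lr_M x n j : (br x (Lb n))@_(Midx (j + n)) = x@_(Midx j) * j%:~R.
Proof. by rewrite (mcoeff_br_Lr x n (Midx j)) /= mcoeffZ mcoeffU eqxx mulr1. Qed.

Lemma mcoeff_br_Ll_L m y j : (br (Lb m) y)@_(Lidx (j + m)) = y@_(Lidx j) * (m - j)%:~R.
Proof. by rewrite (mcoeff_br_Ll m y (Lidx j)) /= mcoeffZ mcoeffU (addrC j) eqxx mulr1. Qed.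

Lemma mcoeff_br_Ll_Y m y j :
  (br (Lb m) y)@_(Yidx (j + m)) = y@_(Yidx j) * (m%:~R / 2 - j%:~R).
Proof. by rewrite (mcoeff_br_Ll m y (Yidx j)) /= mcoeffZ mcoeffU (addrC j) eqxx mulr1. Qed.

Lemma mcoeff_br_Ll_M m y j : (br (Lb m) y)@_(Midx (j + m)) = y@_(Midx j) * - j%:~R.
Proof. by rewrite (mcoeff_br_Ll m y (Midx j)) /= mcoeffZ mcoeffU (addrC j) eqxx mulr1. Qed.

Lemma mcoeff_D_Lb (r1 r2 r3 : C) {n} {c : B} : c != Midx n ->
  (r1 *: D1 (Lb n) + r2 *: D2 (Lb n) + r3 *: D3 (Lb n))@_c = 0.
Proof.
move=> cn; rewrite /D1 /D2 /D3 /Lb !ext_basis scaler0 addr0 scalerA -scalerDl.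
by rewrite mcoeffZ mcoeffU eq_sym (negbTE cn) mulr0.
Qed.

Section TwoSidedForm.

Context {phi psi : V -> V} {rho1 rho2 rho3 theta1 theta2 theta3 : V -> C}.

Hypothesis two_forms : forall x y : V,
  rho1 x *: D1 y + rho2 x *: D2 y + rho3 x *: D3 y + br (phi x) y =
  theta1 y *: D1 x + theta2 y *: D2 x + theta3 y *: D3 x + br x (psi y).

Lemma mcoeff_br_phi_psi m n (c : B) : c != Midx n -> c != Midx m ->
  (br (phi (Lb m)) (Lb n))@_c = (br (Lb m) (psi (Lb n)))@_c.
Proof.
move=> cn cm; rewrite -[LHS]add0r -[RHS]add0r.
rewrite -{1}(mcoeff_D_Lb (rho1 (Lb m)) (rho2 (Lb m)) (rho3 (Lb m)) cn).
rewrite -{1}(mcoeff_D_Lb (theta1 (Lb n)) (theta2 (Lb n)) (theta3 (Lb n)) cm).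
rewrite -[LHS]mcoeffD -[RHS]mcoeffD.
exact: (congr1 (mcoeff c) (two_forms (Lb m) (Lb n))).
Qed.

Lemma phi_psi_Lcoeff m n j :
  (phi (Lb m))@_(Lidx (m + j)) * (m + j - n)%:~R
  = (psi (Lb n))@_(Lidx (n + j)) * (m - (n + j))%:~R.
Proof.
rewrite -mcoeff_br_Lr_L -mcoeff_br_Ll_L (_ : n + j + m = m + j + n); last lia.
exact: mcoeff_br_phi_psi.
Qed.

Lemma phi_psi_Ycoeff m n j :
  (phi (Lb m))@_(Yidx (m + j)) * - (n%:~R / 2 - (m + j)%:~R)
  = (psi (Lb n))@_(Yidx (n + j)) * (m%:~R / 2 - (n + j)%:~R).
Proof.
rewrite -mcoeff_br_Lr_Y -mcoeff_br_Ll_Y (_ : n + j + m = m + j + n); last lia.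
exact: mcoeff_br_phi_psi.
Qed.

Lemma phi_psi_Mcoeff m n k : m + k != 0 -> n + k != 0 ->
  (phi (Lb m))@_(Midx (m + k)) * (m + k)%:~R
  = (psi (Lb n))@_(Midx (n + k)) * - (n + k)%:~R.
Proof.
move=> mk nk; rewrite -(mcoeff_br_Lr_M _ n) -(mcoeff_br_Ll_M m).
rewrite (_ : n + k + m = m + k + n); last lia.
by apply: mcoeff_br_phi_psi; rewrite eq_Midx; lia.
Qed.

End TwoSidedForm.

Lemma mcoeffZ_Mb (a : C) m (c : B) : (a *: Mb m)@_c = a *+ (Midx m == c).
Proof. by rewrite mcoeffZ mcoeffU mulr_natr. Qed.

Lemma mcoeffZ_Lb (a : C) m (c : B) : (a *: Lb m)@_c = a *+ (Lidx m == c).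
Proof. by rewrite mcoeffZ mcoeffU mulr_natr. Qed.

Lemma intrC_eq0 (k : int) : (k%:~R == 0 :> C) = (k == 0).
Proof. exact: intr_eq0. Qed.

(* The filter [m + k != 0] is harmless: those terms vanish anyway since [x / 0 = 0]. *)
Lemma mcoeff_sum_Mb (mu : int -> C) (S : seq int) m (c : B) :
  uniq S -> (forall k, k \notin S -> mu k = 0) ->
  (\sum_(k <- S | m + k != 0) (mu k / (m + k)%:~R) *: Mb (m + k))@_c
  = if c is inr j then mu (j - m) / j%:~R else 0.
Proof.
move=> uS muS; rewrite raddf_sum /=.
case: c => [[j|j]|j]; try by rewrite big1 // => k _; rewrite mcoeffZ_Mb.
rewrite big_mkcond /=.
have term k : (if m + k != 0 then (mu k / (m + k)%:~R *: Mb (m + k))@_(Midx j) else 0)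
              = (mu k / j%:~R) *+ (k == j - m).
  rewrite mcoeffZ_Mb eq_Midx (_ : (k == j - m) = (m + k == j)); last by apply/eqP/eqP; lia.
  have [<-|_] := eqVneq (m + k) j; last by case: ifP; rewrite !mulr0n.
  by case: ifP => // /negbFE/eqP ->; rewrite invr0 mulr0.
rewrite (eq_bigr _ (fun k _ => term k)).
have [jS|jS] := boolP (j - m \in S).
  by rewrite (bigD1_seq (j - m)) //= eqxx big1 ?addr0 // => k /negbTE ->.
rewrite muS ?mul0r // big1_seq // => k /andP[_ kS].
by case: eqP => // ek; rewrite -ek kS in jS.
Qed.

Lemma Lb_normal_form (x : V) (lam : C) (mu : int -> C) (S : seq int) m :
  uniq S -> (forall k, k \notin S -> mu k = 0) ->
  (forall j, x@_(Lidx j) = lam *+ (j == m)) -> (forall j, x@_(Yidx j) = 0) ->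
  (forall k, m + k != 0 -> x@_(Midx (m + k)) * (m + k)%:~R = mu k) ->
  x = lam *: Lb m + \sum_(k <- S | m + k != 0) (mu k / (m + k)%:~R) *: Mb (m + k)
      + x@_(Midx 0) *: Mb 0.
Proof.
move=> uS muS xL xY xM; apply/malgP => c; rewrite !mcoeffD.
rewrite [X in _ = X + _ + _]mcoeffZ_Lb [X in _ = _ + X]mcoeffZ_Mb.
rewrite [X in _ = _ + X + _]mcoeff_sum_Mb //.
case: c => [[j|j]|j] /=; rewrite !mulr0n ?addr0.
- by rewrite xL eq_Lidx eq_sym.
- exact: xY.
- rewrite add0r eq_Midx; have [->|j0] := eqVneq j 0; first by rewrite invr0 mulr0 add0r.
  by rewrite mulr0n addr0 -(xM (j - m)) (addrC m) subrK ?mulfK ?intrC_eq0.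
Qed.

Lemma Mcoeff_finite_support (x : V) (mu : int -> C) :
  (forall k, k != 0 -> x@_(Midx k) * k%:~R = mu k) ->
  exists S : seq int, uniq S /\ forall k, k \notin S -> mu k = 0.
Proof.
move=> xM; pose S := [seq (if b is inr k then k else 0) | b <- enum_fset (msupp x)].
exists (undup (0 :: S)); split=> [|k]; first exact: undup_uniq.
rewrite mem_undup inE negb_or => /andP[k0 kS]; rewrite -xM //.
suff -> : x@_(Midx k) = 0 by rewrite mul0r.
by apply: mcoeff_outdom; apply: contra kS => kx; apply/mapP; exists (Midx k).
Qed.

Theorem lemma3p2 (f : V -> V -> V) (phi psi : {linear V -> V})
  (rho1 rho2 rho3 theta1 theta2 theta3 : {scalar V}) :
  biderivation f ->
  (forall x y : V, f x y =
     rho1 x *: D1 y + rho2 x *: D2 y + rho3 x *: D3 y + br (phi x) y) ->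
  (forall x y : V, f x y =
     theta1 y *: D1 x + theta2 y *: D2 x + theta3 y *: D3 x + br x (psi y)) ->
  exists (lambda : C) (s0 e0 : int -> C) (mu : int -> C) (S : seq int),
    uniq S /\ (forall k : int, k \notin S -> mu k = 0) /\
    forall m : int,
      phi (Lb m) = lambda *: Lb m
                   + \sum_(k <- S | m + k != 0) (mu k / (m + k)%:~R) *: Mb (m + k)
                   + s0 m *: Mb 0 /\
      psi (Lb m) = lambda *: Lb m
                   - \sum_(k <- S | m + k != 0) (mu k / (m + k)%:~R) *: Mb (m + k)
                   + e0 m *: Mb 0.
Proof.
(* Only the two expressions of f on pairs (L_m, L_n) are needed. *)
move=> _ phi_form psi_form.
have two_forms x y := etrans (esym (phi_form x y)) (psi_form x y).
pose coef (idx : int -> B) (g : V -> V) m j := (g (Lb m))@_(idx j).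
have [lam coeffL] := @Lsystem_diagonal _ (coef (fun j => Lidx j) phi)
  (coef (fun j => Lidx j) psi) (phi_psi_Lcoeff two_forms).
have coeffY := @Ysystem_zero _ (coef (fun j => Yidx j) phi)
  (coef (fun j => Yidx j) psi) (phi_psi_Ycoeff two_forms).
have [mu coeffM] := @Msystem_inverse_index _ (coef (fun j => Midx j) phi)
  (coef (fun j => Midx j) psi) (phi_psi_Mcoeff two_forms).
have [S [uS muS]] : exists S : seq int, uniq S /\ forall k, k \notin S -> mu k = 0.
  apply: (@Mcoeff_finite_support (phi (Lb 0))) => k k0.
  by move: (coeffM 0 k); rewrite add0r => /(_ k0) [].
exists lam, (fun m => (phi (Lb m))@_(Midx 0)), (fun m => (psi (Lb m))@_(Midx 0)), mu, S.
do 2!split=> //; move=> m; split.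
  apply: Lb_normal_form => // [j|j|k /(coeffM m k)[]//].
  - by have [] := coeffL m j.
  - by have [] := coeffY m j.
have muNS k : k \notin S -> - mu k = 0 by move/muS ->; rewrite oppr0.
rewrite -sumrN; under eq_bigr => k _ do rewrite -scaleNr -mulNr.
apply: Lb_normal_form => // [j|j|k /(coeffM m k)[_ ->]//].
- by have [] := coeffL m j.
- by have [] := coeffY m j.
Qed.
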